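(* Let $\mathbf{J}\in\mathbb{R}^{n\times p}$, $\mathbf{J}'\in\mathbb{R}^{n\times q}$, $\mathbf{K}=\mathbf{J}\mathbf{J}^{\top}$ positive definite, $\mathbf{S}=\mathbf{J}'\mathbf{J}'^{\top}$, $\sigma>0$, and $\mathbf{Y}\in\mathbb{R}^n\setminus\{0\}$. Define $$\mathcal{R}(\boldsymbol{\theta})=\|\mathbf{Y}-\mathbf{K}(\mathbf{K}+\sigma\mathbf{I})^{-1}\mathbf{Y}\|^2,\qquad \mathcal{R}(\boldsymbol{\theta}\cup\hat{\boldsymbol{\theta}})=\|\mathbf{Y}-(\mathbf{K}+\mathbf{S})(\mathbf{K}+\mathbf{S}+\sigma\mathbf{I})^{-1}\mathbf{Y}\|^2,$$ let $\eta=\|\mathbf{K}^{-1/2}\mathbf{S}\mathbf{K}^{-1/2}\|$ and assume $\eta<1$. If $\kappa(\mathbf{K}+\sigma\mathbf{I})\le c$, then with $a=\frac{c}{(1-\eta)^2}$, $$\frac{\lambda_{\max}(\mathbf{K}+\mathbf{S}+\sigma\mathbf{I})}{a\,\lambda_{\max}(\mathbf{K}+\sigma\mathbf{I})}\le\left(\frac{\mathcal{R}(\boldsymbol{\theta}\cup\hat{\boldsymbol{\theta}})}{\mathcal{R}(\boldsymbol{\theta})}\right)^{1/2}\le\frac{a\,\lambda_{\max}(\mathbf{K}+\mathbf{S}+\sigma\mathbf{I})}{\lambda_{\max}(\mathbf{K}+\sigma\mathbf{I})}.$$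
   Context: $\kappa(\mathbf{A})=\lambda_{\max}(\mathbf{A})/\lambda_{\min}(\mathbf{A})$ is the condition number of a positive definite matrix; norms of matrices are spectral norms. In the application, $\mathbf{K}$ is the neural tangent kernel Gram matrix on training inputs $\mathbf{x}_1,\dots,\mathbf{x}_n$ induced by the trainable parameters $\boldsymbol{\theta}$ ($\mathbf{J}$ = Jacobian of outputs w.r.t. $\boldsymbol{\theta}$), $\mathbf{S}$ is the kernel induced by additional parameters $\hat{\boldsymbol{\theta}}$, $[\mathbf{S}]_{ij}=\nabla_{\hat{\boldsymbol{\theta}}}f(\mathbf{x}_i)\nabla_{\hat{\boldsymbol{\theta}}}f(\mathbf{x}_j)^{\top}$, $\mathbf{Y}$ the training targets, and $\mathcal{R}(\cdot)$ the training squared residual of NTK kernel ridge regression with regularization $\sigma$ for the respective parameter set (the linearized proxy for the empirical risk of fine-tuning those parameters). *)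

From HB Require Import structures.
From mathcomp Require Import all_boot all_order all_algebra.
From mathcomp Require Import classical_sets reals.
Set Implicit Arguments. Unset Strict Implicit. Unset Printing Implicit Defensive.
Import Order.TTheory GRing.Theory Num.Theory.
Local Open Scope ring_scope.
Local Open Scope classical_set_scope.

Section Defs.
Variable R : realType.

Definition vnorm n (v : 'cV[R]_n) : R := Num.sqrt (\sum_i v i 0 ^+ 2).

Definition specnorm m n (A : 'M[R]_(m, n)) : R :=
  sup [set vnorm (A *m x) | x in [set x : 'cV[R]_n | vnorm x = 1]].

Definition lambda_max n (A : 'M[R]_n) : R := sup [set a | eigenvalue A a].
Definition lambda_min n (A : 'M[R]_n) : R := inf [set a | eigenvalue A a].

Definition cond n (A : 'M[R]_n) : R := lambda_max A / lambda_min A.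

Definition symmetric n (A : 'M[R]_n) : Prop := A^T = A.

Definition posdef n (A : 'M[R]_n) : Prop :=
  symmetric A /\ forall x : 'cV[R]_n, x != 0 -> 0 < (x^T *m A *m x) 0 0.

Definition residual n (G : 'M[R]_n) (sigma : R) (Y : 'cV[R]_n) : R :=
  vnorm (Y - G *m invmx (G + sigma%:M) *m Y) ^+ 2.
End Defs.

From HB Require Import structures.
From mathcomp Require Import all_boot all_order all_algebra.
From mathcomp Require Import classical_sets reals.
From mathcomp Require Import lra ring.
Set Implicit Arguments. Unset Strict Implicit. Unset Printing Implicit Defensive.
Import Order.TTheory GRing.Theory Num.Theory.
Local Open Scope ring_scope.

(* With A = K + sigma I and A' = K + S + sigma I, both residuals have the form
   sigma^2 |G^-1 Y|^2 (G = A, A'), so the square root of their ratio lies between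
   lambda_min(A) / lambda_max(A') and lambda_max(A) / lambda_min(A').  Since
   Kmh S Kmh has norm eta, S <= eta K as quadratic forms, hence
   lambda_max(A') <= (1 + eta) lambda_max(A); together with
   lambda_max(A) <= c lambda_min(A) and (1 + eta)(1 - eta) <= 1 this yields both
   bounds.  Extreme eigenvalues of a symmetric M are reached through the Rayleigh
   quotient: its supremum lambda is an eigenvalue, for otherwise lambda I - M would
   be invertible and positive semidefinite, hence uniformly positive definite,
   and lambda would not be the least upper bound. *)

Lemma quadratic_ge0_discr (R : realFieldType) (a b c : R) : 0 <= c ->
  (forall t, 0 <= a + 2 * b * t + c * t ^+ 2) -> b ^+ 2 <= a * c.
Proof.
move=> c_ge0 hq; have [c_gt0|c_le0] := ltrP 0 c.
  have := hq (- b / c).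
  have -> : a + 2 * b * (- b / c) + c * (- b / c) ^+ 2 = a - b ^+ 2 / c.
    by field; rewrite gt_eqF.
  by rewrite subr_ge0 ler_pdivrMr.
have c0 : c = 0 by apply/le_anti; rewrite c_le0 c_ge0.
move: hq; rewrite c0 => hq; have [->|b_neq0] := eqVneq b 0; first by rewrite expr0n mulr0.
have := hq (- (a + 1) / (2 * b)).
have -> : a + 2 * b * (- (a + 1) / (2 * b)) + 0 * (- (a + 1) / (2 * b)) ^+ 2 = -1.
  by field.
lra.
Qed.

Lemma le_of_sqr_le (R : realDomainType) (x y : R) : 0 <= y -> x ^+ 2 <= y ^+ 2 -> x <= y.
Proof.
move=> y_ge0 hxy; have [x_le0|x_gt0] := lerP x 0; first exact: le_trans x_le0 y_ge0.
by rewrite -(ler_pXn2r (n := 2)) // nnegrE ltW.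
Qed.

Section DotProduct.
Variables (R : realFieldType) (n : nat).
Implicit Types (u v w x : 'cV[R]_n) (M N B : 'M[R]_n).

Definition dot u v : R := (u^T *m v) 0 0.
Definition qform M x : R := dot x (M *m x).

Lemma dotE u v : dot u v = \sum_i u i 0 * v i 0.
Proof. by rewrite /dot !mxE; apply: eq_bigr => i _; rewrite !mxE. Qed.

Lemma dotC u v : dot u v = dot v u.
Proof. by rewrite !dotE; apply: eq_bigr => i _; rewrite mulrC. Qed.

Lemma dotDr u v w : dot u (v + w) = dot u v + dot u w.
Proof. by rewrite /dot mulmxDr mxE. Qed.

Lemma dotZr a u v : dot u (a *: v) = a * dot u v.
Proof. by rewrite /dot -scalemxAr mxE. Qed.

Lemma dotDl u v w : dot (v + w) u = dot v u + dot w u.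
Proof. by rewrite dotC dotDr !(dotC u). Qed.

Lemma dotZl a u v : dot (a *: v) u = a * dot v u.
Proof. by rewrite dotC dotZr dotC. Qed.

Lemma dot0l u : dot 0 u = 0.
Proof. by rewrite /dot trmx0 mul0mx mxE. Qed.

Lemma dot_ge0 u : 0 <= dot u u.
Proof. by rewrite dotE sumr_ge0 // => i _; rewrite -expr2 sqr_ge0. Qed.

Lemma dot_eq0 u : (dot u u == 0) = (u == 0).
Proof.
apply/idP/idP => [|/eqP->]; last by rewrite dot0l.
rewrite dotE psumr_eq0 => [/allP u0|i _]; last by rewrite -expr2 sqr_ge0.
apply/eqP/matrixP => i j; rewrite (ord1 j) mxE.
by have := u0 i (mem_index_enum _); rewrite /= -expr2 sqrf_eq0 => /eqP.
Qed.

Lemma dot_gt0 u : u != 0 -> 0 < dot u u.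
Proof. by move=> u_neq0; rewrite lt_def dot_eq0 u_neq0 dot_ge0. Qed.

Lemma dot_trmx M u v : dot u (M *m v) = dot (M^T *m u) v.
Proof. by rewrite /dot trmx_mul trmxK mulmxA. Qed.

Lemma qformD M N x : qform (M + N) x = qform M x + qform N x.
Proof. by rewrite /qform mulmxDl dotDr. Qed.

Lemma qformN M x : qform (- M) x = - qform M x.
Proof. by rewrite /qform /dot mulNmx mulmxN mxE. Qed.

Lemma qformB M N x : qform (M - N) x = qform M x - qform N x.
Proof. by rewrite qformD qformN. Qed.

Lemma qform_scalar a x : qform a%:M x = a * dot x x.
Proof. by rewrite /qform mul_scalar_mx dotZr. Qed.

Lemma qform_mul M N x : qform (N^T *m M *m N) x = qform M (N *m x).
Proof. by rewrite /qform /dot trmx_mul !mulmxA. Qed.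

Lemma cauchy_schwarz_qform M u v : M^T = M -> (forall x, 0 <= qform M x) ->
  dot u (M *m v) ^+ 2 <= qform M u * qform M v.
Proof.
move=> MT M_psd; apply: quadratic_ge0_discr => // t.
have := M_psd (u + t *: v).
rewrite /qform mulmxDr -scalemxAr !dotDl !dotDr !dotZl !dotZr.
rewrite [dot v (M *m u)]dot_trmx MT [dot (M *m v) u]dotC.
set a := dot u (M *m u); set b := dot u (M *m v); set c := dot v (M *m v).
by rewrite (_ : a + 2 * b * t + c * t ^+ 2 = a + t * b + (t * b + t * (t * c))) //; ring.
Qed.

Lemma cauchy_schwarz u v : dot u v ^+ 2 <= dot u u * dot v v.
Proof.
have := @cauchy_schwarz_qform 1%:M u v; rewrite /qform !mul1mx; apply.
  by rewrite tr_scalar_mx.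
by move=> x; rewrite mul1mx dot_ge0.
Qed.

End DotProduct.

Lemma qform_gram (R : realFieldType) n m (A : 'M[R]_(n, m)) x :
  qform (A *m A^T) x = dot (A^T *m x) (A^T *m x).
Proof. by rewrite /qform /dot trmx_mul trmxK !mulmxA. Qed.

Section QuadraticForms.
Variables (R : realFieldType) (n : nat).
Implicit Types (u v x : 'cV[R]_n) (M B : 'M[R]_n).

Lemma dot_le_mean u v : 2 * dot u v <= dot u u + dot v v.
Proof.
have := cauchy_schwarz u v; have := sqr_ge0 (dot u u - dot v v).
have := dot_ge0 u; have := dot_ge0 v; nra.
Qed.

Lemma mulmx_bounded B : exists2 C, 0 <= C & forall x, dot (B *m x) (B *m x) <= C * dot x x.
Proof.
exists (\sum_i dot (row i B)^T (row i B)^T) => [|x].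
  by rewrite sumr_ge0 // => i _; apply: dot_ge0.
rewrite [dot (B *m x) _]dotE mulr_suml; apply: ler_sum => i _.
have -> : (B *m x) i 0 = dot (row i B)^T x.
  by rewrite dotE !mxE; apply: eq_bigr => j _; rewrite !mxE.
by rewrite -expr2 cauchy_schwarz.
Qed.

Lemma qform_bounded B : exists2 D, 0 <= D & forall x, qform B x <= D * dot x x.
Proof.
have [C C_ge0 hC] := mulmx_bounded B.
exists ((1 + C) / 2) => [|x]; first by rewrite divr_ge0 // addr_ge0.
by have := dot_le_mean x (B *m x); have := hC x; rewrite /qform; lra.
Qed.

Lemma qform_gt0_unitmx M : (forall x, x != 0 -> 0 < qform M x) -> M \in unitmx.
Proof.
move=> M_pd; rewrite unitmxE unitfE; apply/negP => /det0P [v v_neq0 vM0].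
have := M_pd v^T; rewrite trmx_eq0 => /(_ v_neq0).
by rewrite /qform /dot trmxK mulmxA vM0 mul0mx mxE ltxx.
Qed.

Section PositiveSemidefinite.
Variable M : 'M[R]_n.
Hypotheses (M_sym : M^T = M) (M_psd : forall x, 0 <= qform M x).

Lemma psd_norm_mul_le D : 0 <= D -> (forall x, qform M x <= D * dot x x) ->
  forall x, dot (M *m x) (M *m x) <= D * qform M x.
Proof.
move=> D_ge0 M_le x; have := cauchy_schwarz_qform x (M *m x) M_sym M_psd.
rewrite dot_trmx M_sym; set p := dot (M *m x) _; set q := qform M x => hpq.
have [p_le0|p_gt0] := lerP p 0; first by rewrite (le_trans p_le0) // mulr_ge0 ?M_psd.
rewrite -(ler_pM2r p_gt0) -expr2 (le_trans hpq) //.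
by move: (M_le (M *m x)) (M_psd x); rewrite -/p -/q; nra.
Qed.

Lemma norm_mul_le_of_qform_le L : 0 <= L -> (forall x, qform M x <= L * dot x x) ->
  forall x, dot (M *m x) (M *m x) <= L ^+ 2 * dot x x.
Proof.
move=> L_ge0 M_le x; apply: le_trans (psd_norm_mul_le L_ge0 M_le x) _.
by rewrite expr2 -mulrA ler_wpM2l.
Qed.

Lemma psd_unitmx_coercive : M \in unitmx ->
  exists2 e, 0 < e & forall x, e * dot x x <= qform M x.
Proof.
move=> M_unit; have [C C_ge0 hC] := mulmx_bounded (invmx M).
have [D D_ge0 hD] := qform_bounded M.
have hk x : dot x x <= C * D * qform M x.
  have := hC (M *m x); rewrite mulmxA mulVmx // mul1mx => /le_trans; apply.
  by rewrite -mulrA ler_wpM2l // psd_norm_mul_le.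
exists (1 + C * D)^-1 => [|x]; first by rewrite invr_gt0 ltr_pwDl ?mulr_ge0.
rewrite mulrC ler_pdivrMr ?ltr_pwDl ?mulr_ge0 //.
by have := hk x; have := M_psd x; have := mulr_ge0 C_ge0 D_ge0; nra.
Qed.

End PositiveSemidefinite.

Lemma norm_mul_ge_of_qform_ge M l : 0 <= l -> (forall x, l * dot x x <= qform M x) ->
  forall x, l ^+ 2 * dot x x <= dot (M *m x) (M *m x).
Proof.
move=> l_ge0 M_ge x; have [->|x_neq0] := eqVneq x 0; first by rewrite dot0l mulr0 dot_ge0.
have xx_gt0 := dot_gt0 x_neq0; rewrite -(ler_pM2r xx_gt0).
have := cauchy_schwarz x (M *m x); have := M_ge x.
have := mulr_ge0 l_ge0 (ltW xx_gt0); rewrite /qform; nra.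
Qed.

End QuadraticForms.

Section Rayleigh.
Local Open Scope classical_set_scope.
Variables (R : realType) (n : nat).
Implicit Types (x v : 'cV[R]_n) (M : 'M[R]_n).

Lemma lambda_minE M : lambda_min M = - lambda_max (- M).
Proof.
rewrite /lambda_min /inf /lambda_max; congr (- sup _); apply/seteqP; split => b /=.
  move=> [c /eigenvalueP [v vM v_neq0] <-]; apply/eigenvalueP.
  by exists v; rewrite // mulmxN vM scaleNr.
move=> /eigenvalueP [v vM v_neq0]; exists (- b); rewrite ?opprK //.
by apply/eigenvalueP; exists v; rewrite // scaleNr -vM mulmxN opprK.
Qed.

Variable n_gt0 : (0 < n)%N.

Section Symmetric.
Variable M : 'M[R]_n.
Hypothesis M_sym : M^T = M.

Lemma eigenvalue_symmetricP a :
  eigenvalue M a <-> exists2 v : 'cV_n, v != 0 & M *m v = a *: v.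
Proof.
split => [/eigenvalueP [v vM v_neq0]|[v v_neq0 Mv]].
  by exists v^T; rewrite ?trmx_eq0 // -{1}M_sym -trmx_mul vM linearZ.
apply/eigenvalueP; exists v^T; rewrite ?trmx_eq0 //.
by rewrite -{1}M_sym -trmx_mul Mv linearZ.
Qed.

Lemma rayleigh_max : exists a,
  (forall x, qform M x <= a * dot x x) /\ exists2 v : 'cV_n, v != 0 & M *m v = a *: v.
Proof.
pose E := [set qform M x / dot x x | x in [set x | x != 0]].
pose one : 'cV[R]_n := const_mx 1.
have E_neq0 : E !=set0.
  exists (qform M one / dot one one); exists one => //=.
  by apply/matrix0Pn; exists (Ordinal n_gt0), 0; rewrite mxE oner_eq0.
have [D _ hD] := qform_bounded M.
have E_ub : ubound E D.
  by move=> _ [x /= x_neq0 <-]; rewrite ler_pdivrMr ?dot_gt0.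
have M_le x : qform M x <= sup E * dot x x.
  have [->|x_neq0] := eqVneq x 0; first by rewrite /qform !dot0l mulr0.
  by rewrite -ler_pdivrMr ?dot_gt0 //; apply: ub_le_sup; [exists D | exists x].
exists (sup E); split => //.
pose N := (sup E)%:M - M.
have N_sym : N^T = N by rewrite /N linearB /= tr_scalar_mx M_sym.
have N_psd x : 0 <= qform N x by rewrite qformB qform_scalar subr_ge0.
have [N_unit|] := boolP (N \in unitmx).
  have [e e_gt0 he] := psd_unitmx_coercive N_sym N_psd N_unit.
  suff : sup E <= sup E - e by lra.
  apply: ge_sup => // _ [x /= x_neq0 <-]; rewrite ler_pdivrMr ?dot_gt0 //.
  by have := he x; rewrite qformB qform_scalar; lra.
rewrite unitmxE unitfE negbK => /det0P [v v_neq0 vN0].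
exists v^T; rewrite ?trmx_eq0 //; apply/eqP.
rewrite eq_sym -subr_eq0 -mul_scalar_mx -mulmxBl -/N.
by rewrite -{1}N_sym -trmx_mul vN0 trmx0.
Qed.

Lemma lambda_maxP : (forall x, qform M x <= lambda_max M * dot x x) /\
  exists2 v : 'cV_n, v != 0 & M *m v = lambda_max M *: v.
Proof.
have [a [M_le [v v_neq0 Mv]]] := rayleigh_max.
suff -> : lambda_max M = a by split => //; exists v.
have a_eig : eigenvalue M a by apply/eigenvalue_symmetricP; exists v.
have a_ub : ubound [set b | eigenvalue M b] a.
  move=> b /eigenvalue_symmetricP [w w_neq0 Mw].
  by have := M_le w; rewrite /qform Mw dotZr ler_pM2r ?dot_gt0.
apply/le_anti/andP; split; first by apply: ge_sup => //; exists a.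
by apply: ub_le_sup => //; exists a.
Qed.

Lemma qform_le_lambda_max x : qform M x <= lambda_max M * dot x x.
Proof. exact: lambda_maxP.1. Qed.

Lemma lambda_max_le b : (forall x, qform M x <= b * dot x x) -> lambda_max M <= b.
Proof.
have [_ [v v_neq0 Mv]] := lambda_maxP => M_le.
by have := M_le v; rewrite /qform Mv dotZr ler_pM2r ?dot_gt0.
Qed.

End Symmetric.

Section SymmetricMin.
Variable M : 'M[R]_n.
Hypothesis M_sym : M^T = M.

Let Mopp_sym : (- M)^T = - M. Proof. by rewrite linearN /= M_sym. Qed.

Lemma lambda_min_le_qform x : lambda_min M * dot x x <= qform M x.
Proof.
have := qform_le_lambda_max Mopp_sym x.
by rewrite lambda_minE qformN mulNr lerNl.
Qed.

Lemma lambda_min_ge b : (forall x, b * dot x x <= qform M x) -> b <= lambda_min M.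
Proof.
move=> M_ge; rewrite lambda_minE lerNr; apply: (lambda_max_le Mopp_sym) => x.
by rewrite qformN mulNr lerN2.
Qed.

Lemma lambda_min_le_max : lambda_min M <= lambda_max M.
Proof.
have [_ [v v_neq0 Mv]] := lambda_maxP M_sym.
by have := lambda_min_le_qform v; rewrite /qform Mv dotZr ler_pM2r ?dot_gt0.
Qed.

Lemma lambda_min_gt0_unitmx : 0 < lambda_min M -> M \in unitmx.
Proof.
move=> l_gt0; apply: qform_gt0_unitmx => x x_neq0.
by apply: lt_le_trans (lambda_min_le_qform x); rewrite mulr_gt0 ?dot_gt0.
Qed.

End SymmetricMin.

End Rayleigh.

Section EuclideanNorm.
Local Open Scope classical_set_scope.
Variables (R : realType) (n : nat).
Implicit Types (u x : 'cV[R]_n) (B : 'M[R]_n).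

Lemma vnormE x : vnorm x = Num.sqrt (dot x x).
Proof. by rewrite /vnorm dotE; congr Num.sqrt; apply: eq_bigr => i _; rewrite expr2. Qed.

Lemma vnorm_ge0 x : 0 <= vnorm x.
Proof. by rewrite vnormE sqrtr_ge0. Qed.

Lemma vnorm_sqr x : vnorm x ^+ 2 = dot x x.
Proof. by rewrite vnormE sqr_sqrtr ?dot_ge0. Qed.

Lemma vnormZ a x : vnorm (a *: x) = `|a| * vnorm x.
Proof. by rewrite !vnormE dotZl dotZr mulrA -expr2 sqrtrM ?sqr_ge0 // sqrtr_sqr. Qed.

Lemma dot_le_vnorm u x : dot u x <= vnorm u * vnorm x.
Proof.
apply: le_of_sqr_le; first by rewrite mulr_ge0 ?vnorm_ge0.
by rewrite exprMn !vnorm_sqr cauchy_schwarz.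
Qed.

Lemma vnorm_mul_le_specnorm B x : vnorm (B *m x) <= specnorm B * vnorm x.
Proof.
have [->|x_neq0] := eqVneq x 0; first by rewrite mulmx0 vnormE dot0l sqrtr0 mulr0.
have [C C_ge0 hC] := mulmx_bounded B.
have spec_ub : has_ubound [set vnorm (B *m u) | u in [set u | vnorm u = 1]].
  exists (1 + C) => _ [u /= u1 <-]; apply: le_of_sqr_le; first lra.
  by rewrite vnorm_sqr (le_trans (hC u)) // -vnorm_sqr u1; nra.
have x_gt0 : 0 < vnorm x by rewrite vnormE sqrtr_gt0 dot_gt0.
set u := (vnorm x)^-1 *: x.
have u1 : vnorm u = 1 by rewrite vnormZ gtr0_norm ?invr_gt0 // mulVf ?gt_eqF.
have xE : x = vnorm x *: u by rewrite scalerA divff ?gt_eqF ?scale1r.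
clearbody u; rewrite {1}xE -scalemxAr vnormZ gtr0_norm // mulrC ler_wpM2r ?vnorm_ge0 //.
by apply: ub_le_sup => //; exists u.
Qed.

Lemma specnorm_ge0 B : (0 < n)%N -> 0 <= specnorm B.
Proof.
move=> n_gt0; pose one : 'cV[R]_n := const_mx 1.
have one_gt0 : 0 < vnorm one.
  rewrite vnormE sqrtr_gt0 dot_gt0 //.
  by apply/matrix0Pn; exists (Ordinal n_gt0), 0; rewrite mxE oner_eq0.
by rewrite -(pmulr_lge0 _ one_gt0) (le_trans (vnorm_ge0 _) (vnorm_mul_le_specnorm B one)).
Qed.

Lemma qform_le_specnorm B x : qform B x <= specnorm B * dot x x.
Proof.
apply: le_trans (dot_le_vnorm _ _) _.
rewrite -vnorm_sqr expr2 mulrCA ler_wpM2l ?vnorm_ge0 //.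
exact: vnorm_mul_le_specnorm.
Qed.

Lemma qform_le_specnorm_congr K S P : P^T = P -> P *m P = invmx K -> K \in unitmx ->
  forall x, qform S x <= specnorm (P *m S *m P) * qform K x.
Proof.
move=> P_sym PP K_unit x.
have PKP : P *m K *m P = 1%:M by apply: mulmx1C; rewrite mulmxA PP mulVmx.
pose y := P *m K *m x; have xE : x = P *m y by rewrite /y !mulmxA PP mulVmx ?mul1mx.
clearbody y; rewrite xE -!qform_mul P_sym PKP qform_scalar mul1r.
exact: qform_le_specnorm.
Qed.

End EuclideanNorm.

Lemma residualE (R : realType) n (G : 'M[R]_n) s Y : G + s%:M \in unitmx ->
  residual G s Y = s ^+ 2 * dot (invmx (G + s%:M) *m Y) (invmx (G + s%:M) *m Y).
Proof.
move=> G_unit; rewrite /residual vnorm_sqr.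
have -> : Y - G *m invmx (G + s%:M) *m Y = s *: (invmx (G + s%:M) *m Y).
  rewrite -{1}(addrK s%:M G) mulmxBl mulmxV // mul_scalar_mx mulmxBl mul1mx.
  by rewrite -scalemxAl opprB addrC subrK.
by rewrite dotZl dotZr mulrA -expr2.
Qed.

Lemma sqrt_ratio_bounds (R : rcfType) (l L l' L' d d' y : R) :
  0 < l -> 0 < l' -> 0 <= L -> 0 <= L' -> 0 < d ->
  l ^+ 2 * d <= y -> y <= L ^+ 2 * d -> l' ^+ 2 * d' <= y -> y <= L' ^+ 2 * d' ->
  l / L' <= Num.sqrt (d' / d) <= L / l'.
Proof.
move=> l_gt0 l'_gt0 L_ge0 L'_ge0 d_gt0 ly yL l'y yL'.
have y_gt0 : 0 < y by apply: lt_le_trans ly; rewrite mulr_gt0 ?exprn_gt0.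
have d'_gt0 : 0 < d'.
  by rewrite ltNge; apply/negP => /(mulr_ge0_le0 (sqr_ge0 L')) d'_le0; lra.
have L'_gt0 : 0 < L'.
  by rewrite lt_def L'_ge0 andbT; apply/eqP => L'0; move: yL'; rewrite L'0 expr0n mul0r; lra.
have r_ge0 : 0 <= d' / d by rewrite divr_ge0 ?ltW.
apply/andP; split; apply: le_of_sqr_le.
- exact: sqrtr_ge0.
- rewrite sqr_sqrtr // expr_div_n ler_pdivrMr ?exprn_gt0 // mulrAC ler_pdivlMr //.
  by rewrite [d' * _]mulrC (le_trans ly yL').
- by rewrite divr_ge0 // ltW.
- rewrite sqr_sqrtr // expr_div_n ler_pdivlMr ?exprn_gt0 // mulrAC ler_pdivrMr //.
  by rewrite mulrC (le_trans l'y yL).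
Qed.

Lemma spectral_ratio_bounds (R : realFieldType) (l L l' L' eta c rho : R) :
  0 < l -> l <= l' -> l <= L -> L <= L' -> L' <= (1 + eta) * L ->
  0 <= eta -> eta < 1 -> L / l <= c -> l / L' <= rho <= L / l' ->
  L' / (c / (1 - eta) ^+ 2 * L) <= rho /\ rho <= c / (1 - eta) ^+ 2 * L' / L.
Proof.
move=> l_gt0 ll' lL LL' L'L eta_ge0 eta_lt1 Ll_le_c /andP[rho_ge rho_le].
have L_gt0 : 0 < L by apply: lt_le_trans lL.
have L'_gt0 : 0 < L' by apply: lt_le_trans LL'.
have Lcl : L <= c * l by rewrite -ler_pdivrMr.
have c_gt0 : 0 < c by nra.
have d_gt0 : 0 < (1 - eta) ^+ 2 by rewrite exprn_gt0 // subr_gt0.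
set a := c / (1 - eta) ^+ 2.
have c_le_a : c <= a.
  by rewrite ler_pdivlMr // -[leRHS]mulr1 ler_pM2l // expr2; nra.
have a_gt0 : 0 < a by apply: lt_le_trans c_le_a.
have key : L' * L' <= l * (a * L).
  have shrink : L' * (1 - eta) <= L by nra.
  have -> : l * (a * L) = c * l * L / (1 - eta) ^+ 2.
    by rewrite /a; field; rewrite subr_eq0 eq_sym lt_eqF.
  rewrite ler_pdivlMr // -expr2 -exprMn.
  by apply: le_trans (_ : L ^+ 2 <= _); rewrite expr2; nra.
split.
- apply: le_trans rho_ge.
  by rewrite ler_pdivrMr ?(mulr_gt0 a_gt0 L_gt0) // mulrAC ler_pdivlMr.
- apply: (le_trans rho_le); apply: le_trans (_ : c <= _).
    by apply: le_trans Ll_le_c; rewrite ler_pM2l // lef_pV2 ?posrE ?(lt_le_trans l_gt0).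
  rewrite -mulrA; apply: le_trans c_le_a _; apply: ler_peMr; first exact: ltW.
  by rewrite ler_pdivlMr // mul1r.
Qed.

Section KernelRidge.
Variables (R : realType) (n : nat) (K S : 'M[R]_n) (sigma : R).
Hypotheses (n_gt0 : (0 < n)%N) (sigma_gt0 : 0 < sigma).
Hypotheses (K_sym : K^T = K) (K_psd : forall x, 0 <= qform K x).
Hypotheses (S_sym : S^T = S) (S_psd : forall x, 0 <= qform S x).

Let A_sym : (K + sigma%:M)^T = K + sigma%:M.
Proof. by rewrite linearD /= K_sym tr_scalar_mx. Qed.

Let A'_sym : (K + S + sigma%:M)^T = K + S + sigma%:M.
Proof. by rewrite !linearD /= K_sym S_sym tr_scalar_mx. Qed.

Lemma lambda_min_le_max_shift : lambda_min (K + sigma%:M) <= lambda_max (K + sigma%:M).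
Proof. exact: lambda_min_le_max. Qed.

Lemma sigma_le_lambda_min : sigma <= lambda_min (K + sigma%:M).
Proof.
apply: lambda_min_ge => // x; rewrite qformD qform_scalar lerDr; exact: K_psd.
Qed.

Lemma lambda_min_update_ge : lambda_min (K + sigma%:M) <= lambda_min (K + S + sigma%:M).
Proof.
apply: lambda_min_ge => // x; apply: le_trans (lambda_min_le_qform n_gt0 A_sym x) _.
by rewrite !qformD lerD2r lerDl.
Qed.

Lemma lambda_max_update_ge : lambda_max (K + sigma%:M) <= lambda_max (K + S + sigma%:M).
Proof.
apply: lambda_max_le => // x; apply: le_trans (qform_le_lambda_max n_gt0 A'_sym x).
by rewrite !qformD lerD2r lerDl.
Qed.

Lemma lambda_max_update_le eta : 0 <= eta -> (forall x, qform S x <= eta * qform K x) ->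
  lambda_max (K + S + sigma%:M) <= (1 + eta) * lambda_max (K + sigma%:M).
Proof.
move=> eta_ge0 S_le_K; apply: lambda_max_le => // x.
apply: le_trans (_ : (1 + eta) * qform (K + sigma%:M) x <= _); last first.
  by rewrite -mulrA ler_wpM2l ?qform_le_lambda_max ?addr_ge0.
rewrite !qformD qform_scalar; have := S_le_K x; have := dot_ge0 x.
by have := mulr_ge0 eta_ge0 (ltW sigma_gt0); nra.
Qed.

Lemma sqrt_residual_ratio_bounds Y : Y != 0 ->
  lambda_min (K + sigma%:M) / lambda_max (K + S + sigma%:M) <=
    Num.sqrt (residual (K + S) sigma Y / residual K sigma Y) <=
  lambda_max (K + sigma%:M) / lambda_min (K + S + sigma%:M).
Proof.
move=> Y_neq0.
have l_gt0 : 0 < lambda_min (K + sigma%:M) by apply: lt_le_trans sigma_le_lambda_min.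
have l'_gt0 : 0 < lambda_min (K + S + sigma%:M) by apply: lt_le_trans lambda_min_update_ge.
have A_psd x : 0 <= qform (K + sigma%:M) x.
  by rewrite qformD qform_scalar addr_ge0 // mulr_ge0 ?dot_ge0 ?ltW.
have A'_psd x : 0 <= qform (K + S + sigma%:M) x.
  by rewrite !qformD qform_scalar !addr_ge0 // mulr_ge0 ?dot_ge0 ?ltW.
have A_unit := lambda_min_gt0_unitmx n_gt0 A_sym l_gt0.
have A'_unit := lambda_min_gt0_unitmx n_gt0 A'_sym l'_gt0.
set z := invmx (K + sigma%:M) *m Y; set z' := invmx (K + S + sigma%:M) *m Y.
have Y_Az : Y = (K + sigma%:M) *m z by rewrite /z mulmxA mulmxV ?mul1mx.
have Y_Az' : Y = (K + S + sigma%:M) *m z' by rewrite /z' mulmxA mulmxV ?mul1mx.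
have z_gt0 : 0 < dot z z.
  by rewrite dot_gt0 //; apply: contraNneq Y_neq0 => z0; rewrite Y_Az z0 mulmx0.
rewrite !residualE // -/z -/z' -mulf_div divff ?mul1r ?expf_neq0 ?gt_eqF //.
have L_ge0 := le_trans (ltW l_gt0) lambda_min_le_max_shift.
have L'_ge0 := le_trans (ltW l'_gt0) (lambda_min_le_max n_gt0 A'_sym).
apply: (sqrt_ratio_bounds (y := dot Y Y)) => //.
- rewrite [in dot Y Y]Y_Az; apply: norm_mul_ge_of_qform_ge; first exact: ltW.
  exact: lambda_min_le_qform.
- rewrite [in dot Y Y]Y_Az; apply: norm_mul_le_of_qform_le => //.
  exact: qform_le_lambda_max.
- rewrite [in dot Y Y]Y_Az'; apply: norm_mul_ge_of_qform_ge; first exact: ltW.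
  exact: lambda_min_le_qform.
- rewrite [in dot Y Y]Y_Az'; apply: norm_mul_le_of_qform_le => //.
  exact: qform_le_lambda_max.
Qed.

End KernelRidge.

Theorem theorem7 (R : realType) (n p q : nat)
  (J : 'M[R]_(n, p)) (J' : 'M[R]_(n, q)) (sigma c : R) (Y : 'cV[R]_n)
  (Kmh : 'M[R]_n) :
  let K := J *m J^T in
  let S := J' *m J'^T in
  posdef K ->
  0 < sigma ->
  Y != 0 ->
  (* Kmh = K^{-1/2}: the positive definite square root of K^{-1} *)
  posdef Kmh -> Kmh *m Kmh = invmx K ->
  let eta := specnorm (Kmh *m S *m Kmh) in
  eta < 1 ->
  cond (K + sigma%:M) <= c ->
  let a := c / (1 - eta) ^+ 2 in
  let ratio := Num.sqrt (residual (K + S) sigma Y / residual K sigma Y) in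
  lambda_max (K + S + sigma%:M) / (a * lambda_max (K + sigma%:M)) <= ratio /\
  ratio <= a * lambda_max (K + S + sigma%:M) / lambda_max (K + sigma%:M).
Proof.
move=> K S [K_sym K_pd] sigma_gt0 Y_neq0 [Kmh_sym _] KmhE eta eta_lt1 cond_le a ratio.
have n_gt0 : (0 < n)%N.
  by have /matrix0Pn [i [j _]] := Y_neq0; exact: leq_ltn_trans (leq0n i) (ltn_ord i).
have S_sym : S^T = S by rewrite /S trmx_mul trmxK.
have K_psd x : 0 <= qform K x by rewrite qform_gram dot_ge0.
have S_psd x : 0 <= qform S x by rewrite qform_gram dot_ge0.
have K_unit : K \in unitmx.
  by apply: qform_gt0_unitmx => x /K_pd; rewrite /qform /dot mulmxA.
have S_le_K := qform_le_specnorm_congr S Kmh_sym KmhE K_unit.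
have eta_ge0 : 0 <= eta := specnorm_ge0 _ n_gt0.
apply: (spectral_ratio_bounds (l := lambda_min (K + sigma%:M))
  (l' := lambda_min (K + S + sigma%:M))) => //.
- by apply: lt_le_trans sigma_gt0 _; apply: sigma_le_lambda_min.
- exact: lambda_min_update_ge.
- exact: lambda_min_le_max_shift.
- exact: lambda_max_update_ge.
- exact: lambda_max_update_le.
- exact: sqrt_residual_ratio_bounds.
Qed.
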